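(* Let $K\subset M$ be closed subsets of $\mathbb{R}^2$. Then the following conditions are equivalent: (i) $M=K\cup C$, where $C$ is the union of a system of components of $\mathbb{R}^2\setminus K$; (ii) $\partial M\subset\partial K$. Moreover, if these conditions hold and $K\in\mathcal{D}_2$, then $M\in\mathcal{D}_2$.
   Context: A function on an open convex set $C\subset\mathbb{R}^d$ is DC if it is the difference of two convex functions on $C$. $\mathcal{D}_2$ denotes the family consisting of $\varnothing$ together with all nonempty closed sets $A\subset\mathbb{R}^2$ whose distance function $d_A=\operatorname{dist}(\cdot,A)$ is DC on $\mathbb{R}^2$. *)

(* the plane R^2 is R * R (product topology =
   Euclidean topology), R : realType. *)
From HB Require Import structures.
From mathcomp Require Import all_boot all_order all_algebra.
From mathcomp Require Import all_classical all_reals all_analysis.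
Set Implicit Arguments. Unset Strict Implicit. Unset Printing Implicit Defensive.
Import Order.TTheory GRing.Theory Num.Theory numFieldNormedType.Exports.
Local Open Scope classical_set_scope.
Local Open Scope ring_scope.

Section Plane.
Variable R : realType.
Local Notation P := (R * R)%type.

Definition boundary (A : set P) : set P := closure A `\` interior A.

Definition edist (x y : P) : R :=
  Num.sqrt ((x.1 - y.1) ^+ 2 + (x.2 - y.2) ^+ 2).

Definition dist_set (A : set P) (x : P) : R := inf [set edist x a | a in A].

Definition pcomb (t : R) (x y : P) : P :=
  (t * x.1 + (1 - t) * y.1, t * x.2 + (1 - t) * y.2).

Definition convex_fun2 (f : P -> R) : Prop :=
  forall (x y : P) (t : R), 0 <= t -> t <= 1 ->
    f (pcomb t x y) <= t * f x + (1 - t) * f y.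

Definition DC2 (f : P -> R) : Prop :=
  exists g h : P -> R, convex_fun2 g /\ convex_fun2 h /\ forall x, f x = g x - h x.

Definition D2 (A : set P) : Prop :=
  A = set0 \/ (closed A /\ A !=set0 /\ DC2 (dist_set A)).

Definition is_component (U C : set P) : Prop :=
  exists2 x, U x & C = connected_component U x.

End Plane.

From Pilot Require Import Defs.
From HB Require Import structures.
From mathcomp Require Import all_boot all_order all_algebra.
From mathcomp Require Import all_classical all_reals all_analysis.
From mathcomp Require Import ring lra.
Set Implicit Arguments. Unset Strict Implicit. Unset Printing Implicit Defensive.
Import Order.TTheory GRing.Theory Num.Theory numFieldNormedType.Exports.
Local Open Scope classical_set_scope.
Local Open Scope ring_scope.

(* For (i) => (ii): components of the open set ~K are open, so every point of
   M \ K is interior to M and the boundary of M lies in K.  For (ii) => (i):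
   the component in ~K of a point of M \ K meets the closed set M only in
   interior points of M, so by connectedness it lies in M.

   For the DC part, write d_K = g - h with g, h convex.  Every segment from a
   point outside M to a point of M meets K, so d_M = d_K off M, and g = h on K.
   Hence F = g + h + d_M satisfies F >= g + h, F = g + h on M and F = 2g off M
   and on K.  F is convex: for z = t x + (1 - t) y outside M, move from z
   towards x (resp. y) until K or x (resp. y) is reached, at a point a
   (resp. b) where F = 2g; convexity of 2g on [a, b] and of g + h on [z, a],
   [z, b] combine into the chord inequality for F at z.  So d_M = F - (g + h). *)

Lemma connected_subset_closed (T : topologicalType) (A M : set T) :
  connected A -> closed M -> A `&` M !=set0 -> A `&` M `<=` interior M ->
  A `<=` M.
Proof.
move=> cA cM AM0 AMint.
suff <- : A `&` M = A by move=> y [].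
apply: cA => //; last by exists M.
exists (interior M); first exact: open_interior.
apply/seteqP; split=> y [Ay My]; split=> //; last exact: interior_subset.
exact: AMint.
Qed.

Section Plane.
Variable R : realType.
Local Notation P := (R * R)%type.
(* Unqualified [edist] is the extended-real distance of mathcomp-analysis. *)
Local Notation edist := Defs.edist.

Lemma pcomb1 (p q : P) : pcomb 1 p q = p.
Proof. by rewrite /pcomb !mul1r subrr !mul0r !addr0; case: p. Qed.

Lemma pcomb0 (p q : P) : pcomb 0 p q = q.
Proof. by rewrite /pcomb !mul0r subr0 !mul1r !add0r; case: q. Qed.

Lemma continuous_pcomb (p q : P) : continuous (fun s : R => pcomb s p q).
Proof.
have comb_cvg (a b s : R) : (fun s => s * a + (1 - s) * b) @ s --> s * a + (1 - s) * b.
  apply: cvgD; first exact: cvgM cvg_id (cvg_cst _).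
  by apply: cvgM (cvg_cst _); apply: cvgB; [exact: cvg_cst | exact: cvg_id].
by move=> s; apply: (cvg_pair (comb_cvg _ _ s) (comb_cvg _ _ s)).
Qed.

Lemma connected_component_segment (A : set P) (p q : P) :
  (forall s, 0 <= s <= 1 -> A (pcomb s p q)) -> connected_component A p q.
Proof.
move=> Aseg; have itv01 s : `[0, 1]%classic s <-> 0 <= s <= 1 by rewrite /= in_itv.
apply: (@connected_component_max _ A ((fun s => pcomb s p q) @` `[0, 1]%classic)).
- by exists 1; [apply/itv01; rewrite ler01 lexx | exact: pcomb1].
- by move=> _ [s /itv01 s01 <-]; exact: Aseg.
- apply: connected_continuous_connected; first exact: segment_connected.
  exact/continuous_subspaceT/continuous_pcomb.
- by exists 0; [apply/itv01; rewrite ler01 lexx | exact: pcomb0].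
Qed.

Lemma ball_pcomb (x z : P) (e s : R) : 0 <= s <= 1 -> ball x e z ->
  ball x e (pcomb s x z).
Proof.
move=> /andP[s0 s1] [xz1 xz2].
have ballR (a b : R) : ball a e b -> ball a e (s * a + (1 - s) * b).
  rewrite -ball_normE /ball_ /= => ab.
  have -> : a - (s * a + (1 - s) * b) = (1 - s) * (a - b) by ring.
  rewrite normrM ger0_norm ?subr_ge0 //; apply: le_lt_trans ab.
  by rewrite -[leRHS]mul1r ler_wpM2r // lerBlDr lerDl.
by split; apply: ballR.
Qed.

Lemma open_connected_component (A : set P) (x : P) :
  open A -> open (connected_component A x).
Proof.
move=> oA; rewrite openE => y Cy; rewrite /interior (same_connected_component Cy).
have /nbhs_ballP[e e0 eA] : nbhs y A.
  by apply: open_nbhs_nbhs; split=> //; exact: connected_component_sub Cy.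
apply/nbhs_ballP; exists e => // z yz.
by apply: connected_component_segment => s s01; apply: eA; exact: ball_pcomb.
Qed.


Lemma edist_pcomb_le (x y : P) (s : R) : 0 <= s <= 1 ->
  edist x (pcomb s x y) <= edist x y.
Proof.
move=> /andP[s0 s1]; rewrite /edist /pcomb /=; apply: ler_wsqrtr.
have shrink (a b : R) : a - (s * a + (1 - s) * b) = (1 - s) * (a - b) by ring.
rewrite !shrink !exprMn -mulrDr -[leRHS]mul1r ler_wpM2r ?addr_ge0 ?sqr_ge0 //.
nra.
Qed.

Lemma dist_set_ge0 (A : set P) (x : P) : A !=set0 -> 0 <= dist_set A x.
Proof.
move=> [a Aa]; apply: lb_le_inf; first by exists (edist x a), a.
by move=> _ [b _ <-]; exact: sqrtr_ge0.
Qed.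

Lemma dist_set_le (A : set P) (x a : P) : A a -> dist_set A x <= edist x a.
Proof.
move=> Aa; apply: ge_inf; last by exists a.
by exists 0 => _ [b _ <-]; exact: sqrtr_ge0.
Qed.

Lemma dist_set_eq0 (A : set P) (x : P) : A x -> dist_set A x = 0.
Proof.
move=> Ax; apply/eqP; rewrite eq_le dist_set_ge0; last by exists x.
have -> : 0 = edist x x by rewrite /edist !subrr expr0n addr0 sqrtr0.
by rewrite dist_set_le.
Qed.

Lemma dist_set_segment_hit (A B : set P) (x : P) : B `<=` A -> B !=set0 ->
  (forall a, A a -> exists2 s, 0 <= s <= 1 & B (pcomb s x a)) ->
  dist_set A x = dist_set B x.
Proof.
move=> BA [b Bb] hit; apply/eqP; rewrite eq_le; apply/andP; split.
- apply: lb_le_inf; first by exists (edist x b), b.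
  by move=> _ [a Ba <-]; apply/dist_set_le/BA.
- apply: lb_le_inf; first by exists (edist x b), b => //; exact: BA.
  move=> _ [a Aa <-]; have [s s01 Bs] := hit a Aa.
  exact: le_trans (dist_set_le x Bs) (edist_pcomb_le x a s01).
Qed.


Lemma convex_fun2_cst (c : R) : convex_fun2 (fun _ : P => c).
Proof. by move=> x y t _ _; rewrite -mulrDl subrKC mul1r. Qed.

Lemma convex_fun2D (f g : P -> R) :
  convex_fun2 f -> convex_fun2 g -> convex_fun2 (fun x => f x + g x).
Proof.
move=> cf cg x y t t0 t1; apply: le_trans (lerD (cf x y t t0 t1) (cg x y t t0 t1)) _.
by rewrite le_eqVlt; apply/orP; left; apply/eqP; ring.
Qed.

Lemma pcomb_chord (x y : P) (t s u : R) :
  0 <= t <= 1 -> 0 <= s < 1 -> 0 <= u < 1 ->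
  let z := pcomb t x y in
  exists2 l, 0 <= l <= 1 &
    l * (1 - s) * (1 - t) = (1 - l) * (1 - u) * t /\
    pcomb l (pcomb s z x) (pcomb u z y) = z.
Proof.
move=> /andP[t0 t1] /andP[s0 s1] /andP[u0 u1] z.
pose D := t * (1 - u) + (1 - t) * (1 - s).
have D0 : 0 < D.
  rewrite /D; have [->|tn0] := eqVneq t 0.
    by rewrite mul0r add0r subr0 mul1r subr_gt0.
  have t_pos : 0 < t by rewrite lt0r tn0.
  by rewrite /D; nra.
have Dn0 : D != 0 by rewrite gt_eqF.
exists (t * (1 - u) / D).
  rewrite divr_ge0 ?mulr_ge0 ?subr_ge0 ?(ltW u1) ?(ltW D0) //=.
  by rewrite ler_pdivrMr // mul1r /D lerDl mulr_ge0 ?subr_ge0 // ltW.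
split; first by rewrite /D; field.
by rewrite /z /pcomb /=; congr (_, _); rewrite /D; field.
Qed.

Lemma chord_le (t s u l fz fx fy fa fb : R) :
  0 <= t <= 1 -> s < 1 -> u < 1 -> 0 <= l <= 1 ->
  l * (1 - s) * (1 - t) = (1 - l) * (1 - u) * t ->
  fz <= l * fa + (1 - l) * fb ->
  fa <= s * fz + (1 - s) * fx -> fb <= u * fz + (1 - u) * fy ->
  fz <= t * fx + (1 - t) * fy.
Proof.
move=> /andP[t0 t1] s1 u1 /andP[l0 l1] lst zab azx bzy.
pose E := l * (1 - s) + (1 - l) * (1 - u).
have E0 : 0 < E by rewrite /E; have [] := lerP s u; nra.
have Ez : E * fz <= l * (1 - s) * fx + (1 - l) * (1 - u) * fy.
  have la : l * fa <= l * (s * fz + (1 - s) * fx) by rewrite ler_wpM2l.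
  have lb : (1 - l) * fb <= (1 - l) * (u * fz + (1 - u) * fy).
    by rewrite ler_wpM2l ?subr_ge0.
  rewrite /E; nra.
have Ex : l * (1 - s) = E * t by rewrite /E; nra.
have Ey : (1 - l) * (1 - u) = E * (1 - t) by rewrite /E; nra.
by rewrite Ex Ey -!mulrA -mulrDr ler_pM2l in Ez.
Qed.


Lemma convex_fun2_glue (M : set P) (F G B : P -> R) :
  convex_fun2 G -> convex_fun2 B -> (forall x, G x <= F x) ->
  (forall x, M x -> F x = G x) -> (forall x, ~ M x -> F x = B x) ->
  (forall z x, ~ M z -> M x -> exists2 s, 0 <= s < 1 &
     M (pcomb s z x) /\ F (pcomb s z x) = B (pcomb s z x)) ->
  convex_fun2 F.
Proof.
move=> cG cB GF FG FB hit x y t t0 t1.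
have G_le p q r : 0 <= r <= 1 -> G (pcomb r p q) <= r * F p + (1 - r) * F q.
  move=> /andP[r0 r1]; apply: le_trans (cG p q r r0 r1) _.
  by apply: lerD; apply: ler_wpM2l; rewrite ?subr_ge0.
have t01 : 0 <= t <= 1 by rewrite t0 t1.
set z := pcomb t x y.
have [Mz|Mz] := pselect (M z); first by rewrite FG //; exact: G_le.
have chord w : exists2 s, 0 <= s < 1 & F (pcomb s z w) = B (pcomb s z w) /\
    F (pcomb s z w) <= s * F z + (1 - s) * F w.
  have [Mw|Mw] := pselect (M w).
    have [s /andP[s0 s1] [Ma FBa]] := hit z w Mz Mw.
    by exists s; rewrite ?s0 //; split=> //; rewrite FG //; apply: G_le; rewrite s0 ltW.
  exists 0; rewrite ?lexx ?ltr01 // pcomb0 FB //; split=> //.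
  by rewrite mul0r add0r subr0 mul1r.
have [s s01 [FBa Fa]] := chord x.
have [u u01 [FBb Fb]] := chord y.
have [l l01 [lst zab]] := pcomb_chord x y t01 s01 u01.
move: s01 u01 (l01) zab => /andP[_ s1] /andP[_ u1] /andP[l0 l1]; rewrite -/z => zab.
apply: (chord_le t01 s1 u1 l01 lst _ Fa Fb).
by rewrite FB // -{1}zab FBa FBb; apply: cB.
Qed.


Section ComponentUnion.
Variables (K : set P) (S : set (set P)).
Hypothesis S_components : forall C, S C -> is_component (~` K) C.
Local Notation M := (K `|` \bigcup_(C in S) C).

Lemma bigcup_components_stable (p q : P) :
  (\bigcup_(C in S) C) p -> connected_component (~` K) p q ->
  (\bigcup_(C in S) C) q.
Proof.
move=> [C SC Cp] pq; exists C => //.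
have [x0 _ C_def] := S_components SC.
by rewrite C_def in Cp *; exact: connected_component_trans Cp pq.
Qed.

Lemma segment_meets (p q : P) : ~ M p -> M q ->
  exists2 s, 0 <= s <= 1 & K (pcomb s p q).
Proof.
move=> Mp Mq; apply: contrapT => no_hit.
have seg s : 0 <= s <= 1 -> (~` K) (pcomb s p q) by move=> s01 Ks; apply: no_hit; exists s.
case: Mq => [Kq|Cq]; first by have := seg 0; rewrite lexx ler01 pcomb0; exact.
apply: Mp; right; apply: bigcup_components_stable Cq _.
exact/connected_component_sym/connected_component_segment.
Qed.

Lemma component_union_interior : closed K -> M `\` K `<=` interior M.
Proof.
move=> cK x [[//|[C SC Cx]] _].
have [x0 _ C_def] := S_components SC.
have oC : open C by rewrite C_def; apply/open_connected_component/closed_openC.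
apply: (@filterS _ _ _ C); first by move=> y Cy; right; exists C.
exact: open_nbhs_nbhs.
Qed.

Lemma boundary_component_union : closed K -> closed M -> boundary M `<=` boundary K.
Proof.
move=> cK cM x [clMx nintMx].
rewrite -(closure_id _).1 // in clMx.
have Kx : K x.
  by apply: contrapT => nKx; apply/nintMx/component_union_interior.
have KM : K `<=` M by move=> y; left.
by split; [exact: subset_closure | move/(interiorS KM)].
Qed.

Lemma dist_set_component_union (x : P) : K !=set0 -> ~ M x ->
  dist_set M x = dist_set K x.
Proof.
move=> K0 Mx; apply: dist_set_segment_hit => // a Ma.
exact: segment_meets.
Qed.

Lemma DC2_dist_component_union : K !=set0 -> DC2 (dist_set K) -> DC2 (dist_set M).
Proof.
move=> K0 [g [h [cg [ch dK]]]].
have M0 : M !=set0 by case: K0 => k Kk; exists k; left.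
have hg x : K x -> h x = g x by move=> Kx; have := dK x; rewrite dist_set_eq0 //; lra.
exists (fun x => g x + h x + dist_set M x), (fun x => g x + h x).
split; last by split; [exact: convex_fun2D | move=> x; ring].
apply: (@convex_fun2_glue M _ (fun x => g x + h x) (fun x => g x + g x)).
- exact: convex_fun2D.
- exact: convex_fun2D.
- by move=> x; rewrite lerDl dist_set_ge0.
- by move=> x Mx; rewrite dist_set_eq0 // addr0.
- by move=> x Mx; rewrite dist_set_component_union // dK; ring.
move=> z x Mz Mx; have [s /andP[s0 s1] Ks] := segment_meets Mz Mx.
have s_lt1 : s < 1.
  by rewrite lt_neqAle s1 andbT; apply/eqP => s1E; rewrite s1E pcomb1 in Ks; apply: Mz; left.
exists s; first by rewrite s0.
by split; [left | rewrite dist_set_eq0 ?hg //; [rewrite addr0 | left]].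
Qed.

Lemma D2_component_union : closed M -> D2 K -> D2 M.
Proof.
move=> cM [K0|[_ [K_ne dK]]]; last first.
  right; split=> //; split; last exact: DC2_dist_component_union.
  by case: K_ne => k Kk; exists k; left.
have [M0|/set0P[m Mm]] := eqVneq M set0; [by left | right; split=> //].
have MT x : M x by apply: contrapT => Mx; have [s _] := segment_meets Mx Mm; rewrite K0.
split; first by exists m.
exists (fun _ => 0), (fun _ => 0); split; [exact: convex_fun2_cst | split].
- exact: convex_fun2_cst.
- by move=> x; rewrite dist_set_eq0 // subr0.
Qed.

End ComponentUnion.

Lemma component_union_of_boundary (K M : set P) :
  closed K -> closed M -> K `<=` M -> boundary M `<=` boundary K ->
  M = K `|` \bigcup_(C in [set C | is_component (~` K) C /\ C `<=` M]) C.
Proof.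
move=> cK cM KM bMK; apply/seteqP; split; last first.
  by move=> x [Kx|[C [_ CM] Cx]]; [exact: KM | exact: CM].
move=> x Mx; have [Kx|nKx] := pselect (K x); [by left | right].
have Cx : connected_component (~` K) x x by exact: connected_component_refl.
exists (connected_component (~` K) x) => //; split; first by exists x.
apply: connected_subset_closed => //; first exact: component_connected.
  by exists x.
move=> y [Cy My]; apply: contrapT => nintMy.
have [clKy _] : boundary K y by apply: bMK; split=> //; exact: subset_closure.
by rewrite -(closure_id _).1 // in clKy; exact: (connected_component_sub Cy).
Qed.

End Plane.

Theorem lemma4p14 (R : realType) (K M : set (R * R)) :
  closed K -> closed M -> K `<=` M ->
  let cond_i := exists S : set (set (R * R)),
      (forall C, S C -> is_component (~` K) C) /\
      M = K `|` \bigcup_(C in S) C in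
  let cond_ii := boundary M `<=` boundary K in
  (cond_i <-> cond_ii) /\ (cond_i -> cond_ii -> D2 K -> D2 M).
Proof.
move=> cK cM KM cond_i cond_ii.
split; last by move=> [S [S_comp M_def]] _; rewrite M_def in cM *; exact: D2_component_union.
split=> [[S [S_comp M_def]] | bMK].
  by rewrite /cond_ii M_def in cM *; exact: boundary_component_union.
exists [set C | is_component (~` K) C /\ C `<=` M]; split; first by move=> C [].
exact: component_union_of_boundary.
Qed.
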